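(* Let $m>0$, $n$ an odd positive integer, $\epsilon>0$, $V=[-m/2,m/2]$. For every $\alpha\in[0,1]$, the mechanism $\mathtt{DPExpMed}_\alpha$ is $\epsilon$-differentially private.
   Context: A dataset is $D=(x_1,\dots,x_n)\in V^n$, indexed so that $x_1\le\dots\le x_n$, with median $\mathcal{T}(D)=x_{\lceil n/2\rceil}$. The percentile loss $q(D,a)$ for $a\in V$ is: $\min\{|\lceil n/2\rceil-i|: a\in[x_i,\mathcal{T}(D)]\}$ if $a\in[x_1,\mathcal{T}(D)]$; $\min\{|\lceil n/2\rceil-i|: a\in[\mathcal{T}(D),x_i]\}$ if $a\in(\mathcal{T}(D),x_n]$; and $\lceil n/2\rceil$ otherwise. The widened percentile loss is $p_\alpha(D,\ell)=\min_{a\in V:|a-\ell|\le\alpha m}q(D,a)$. $\mathtt{DPExpMed}_\alpha(D)$ is the random point of $V$ with density proportional to $\exp(-\frac{\epsilon}{2}p_\alpha(D,\ell))$, $\ell\in V$. Two datasets are neighboring if, as multisets, they differ in exactly one element. A randomized mechanism $\mathcal{M}:V^n\to V$ is $\epsilon$-differentially private if $\Pr[\mathcal{M}(D)\in S]\le e^{\epsilon}\Pr[\mathcal{M}(D')\in S]$ for all neighboring $D,D'$ and measurable $S\subseteq V$. *)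

From HB Require Import structures.
From mathcomp Require Import all_boot all_order all_algebra.
From mathcomp Require Import all_classical all_reals all_analysis.
Set Implicit Arguments. Unset Strict Implicit. Unset Printing Implicit Defensive.
Import Order.TTheory GRing.Theory Num.Theory.
Import numFieldNormedType.Exports.
Local Open Scope classical_set_scope.
Local Open Scope ring_scope.

Section DPMedian.
Variables (R : realType) (n : nat).

Definition Vdom (m : R) : set R := `[- (m / 2), m / 2]%classic.

(* Order statistics, 1-based: xs D i = x_i where x_1 <= ... <= x_n. *)
Definition xs (D : n.-tuple R) (i : nat) : R :=
  nth 0 (sort (fun x y : R => x <= y) (tval D)) i.-1.

Definition medidx : nat := uphalf n.

Definition median (D : n.-tuple R) : R := xs D medidx.

Definition dist_med (i : nat) : nat := ((medidx - i) + (i - medidx))%N.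

(* percentile loss q(D, a); i ranges over 1..n (encoded as j.+1, j < n) *)
Definition qloss (D : n.-tuple R) (a : R) : nat :=
  let T := median D in
  if (xs D 1 <= a) && (a <= T) then
    \big[minn/medidx]_(j < n | (xs D j.+1 <= a) && (a <= T)) dist_med j.+1
  else if (T < a) && (a <= xs D n) then
    \big[minn/medidx]_(j < n | (T <= a) && (a <= xs D j.+1)) dist_med j.+1
  else medidx.

Definition ploss (m alpha : R) (D : n.-tuple R) (l : R) : R :=
  inf [set ((qloss D a)%:R : R) | a in [set a | Vdom m a /\ `|a - l| <= alpha * m]].

Definition expmed_weight (m eps alpha : R) (D : n.-tuple R) (l : R) : R :=
  expR (- (eps / 2) * ploss m alpha D l).

(* Pr[DPExpMed_alpha(D) \in S] for S a measurable subset of V *)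
Definition DPExpMed_prob (m eps alpha : R) (D : n.-tuple R) (S : set R) : R :=
  (\int[lebesgue_measure]_(l in S) expmed_weight m eps alpha D l) /
  (\int[lebesgue_measure]_(l in Vdom m) expmed_weight m eps alpha D l).

Definition dataset_in (m : R) (D : n.-tuple R) : Prop :=
  forall i : 'I_n, Vdom m (tnth D i).

(* neighboring: as multisets, differ in exactly one element *)
Definition neighboring (D D' : n.-tuple R) : Prop :=
  (exists (i : nat) (y : R), perm_eq (tval D) (set_nth 0 (tval D') i y))
  /\ ~~ perm_eq (tval D) (tval D').

(* eps-differential privacy of a mechanism V^n -> V given by its
   output probabilities Pr[M(D) \in S] *)
Definition eps_DP (m eps : R) (Pr : n.-tuple R -> set R -> R) : Prop :=
  forall D D' : n.-tuple R, dataset_in m D -> dataset_in m D' ->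
  neighboring D D' ->
  forall S : set R, measurable S -> S `<=` Vdom m ->
  Pr D S <= expR eps * Pr D' S.

End DPMedian.

From HB Require Import structures.
From mathcomp Require Import all_boot all_order all_algebra.
From mathcomp Require Import all_classical all_reals all_analysis.
From mathcomp Require Import zify ring lra.
Import Order.TTheory GRing.Theory Num.Theory.
Set Implicit Arguments. Unset Strict Implicit.
Local Open Scope ring_scope.

(* Let x_1 <= ... <= x_n be the sorted data and k = ceil(n/2). For odd n the percentile loss
   is q(D, a) = k - min(k, #{i | x_i <= a}, #{i | x_i >= a}): left of the median the best
   index is i = #{i | x_i <= a}, right of it i = n + 1 - #{i | x_i >= a}, and n + 1 = 2k.
   Replacing one data point moves each count by at most one, hence q(D, a) and the widened
   loss p_alpha(D, l), an infimum of such values over a set independent of D, move by at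
   most one. So the densities of neighbouring datasets agree up to a factor e^(eps/2)
   pointwise, and both the numerator and the normalising constant of Pr[M(D) in S] change by
   at most that factor. *)

Lemma sorted_nth_count d (T : porderType d) (x0 : T) (P : pred T) (s : seq T) :
  sorted <=%O s -> (forall x y, (x <= y)%O -> P y -> P x) ->
  forall j, (j < size s)%N -> P (nth x0 s j) = (j < count P s)%N.
Proof.
move=> + Pdw; elim: s => // x s IHs /= path_xs.
have sorted_s : sorted <=%O s := path_sorted path_xs.
have x_le : all (>= x)%O s by apply: order_path_min path_xs; exact: le_trans.
case Px: (P x).
  by case=> [|j] //=; rewrite ltnS => j_lt; rewrite IHs.
have notP y : y \in s -> P y = false.
  by move=> ys; apply: negbTE; apply/negP => /(Pdw _ _ (allP x_le y ys)); rewrite Px.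
rewrite (eq_in_count (a2 := pred0) notP) count_pred0.
by case=> [|j] //= j_lt; rewrite notP ?mem_nth.
Qed.

Lemma inf_image_le_addr (T : Type) (R : realType) (U : set T) (f g : T -> R) c :
  (U !=set0)%classic -> has_lbound (f @` U)%classic ->
  (forall x, U x -> f x <= g x + c) -> inf (f @` U)%classic <= inf (g @` U)%classic + c.
Proof.
move=> [x0 Ux0] f_lb fg; rewrite -lerBlDr; apply: lb_le_inf; first by exists (g x0), x0.
move=> _ [x Ux <-]; rewrite lerBlDr; apply: le_trans (fg x Ux).
by apply: ge_inf => //; exists x.
Qed.

Section NonnegativeIntegral.
Local Open Scope classical_set_scope.
Context d (T : measurableType d) (R : realType) (mu : {measure set T -> \bar R}).
Local Open Scope ereal_scope.
Import HBNNSimple.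

(* Unlike [ge0_le_integral], this needs no measurability: the integral of a nonnegative
   function is a supremum over the simple functions below it. *)
Lemma ge0_le_integral_restrict (D E : set T) (f g : T -> \bar R) :
  (forall x, D x -> 0 <= f x) -> (forall x, E x -> 0 <= g x) ->
  (forall x, (f \_ D) x <= (g \_ E) x) ->
  \int[mu]_(x in D) f x <= \int[mu]_(x in E) g x.
Proof.
move=> f_ge0 g_ge0 fg; rewrite !ge0_integralE //.
by apply: ereal_sup_le => _ [h hf <-]; exists h => // x; apply: le_trans (hf x) (fg x).
Qed.

Lemma ge0_integralZl_le (D : set T) (c : R) (f : T -> \bar R) : (0 < c)%R ->
  (forall x, D x -> 0 <= f x) ->
  \int[mu]_(x in D) (c%:E * f x) <= c%:E * \int[mu]_(x in D) f x.
Proof.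
move=> c_gt0 f_ge0; have cV_ge0 : (0 <= c^-1)%R by rewrite invr_ge0 ltW.
have cVcK y : c^-1%:E * (c%:E * y) = y by rewrite muleA -EFinM mulVf ?gt_eqF // mul1e.
have ccVK y : c%:E * (c^-1%:E * y) = y by rewrite muleA -EFinM mulfV ?gt_eqF // mul1e.
rewrite !ge0_integralE // => [|x /f_ge0 fx_ge0]; last by rewrite mule_ge0 // lee_fin ltW.
apply: ge_ereal_sup => _ [h hf <-].
rewrite -[sintegral mu h]ccVK; apply: lee_wpmul2l; first by rewrite lee_fin ltW.
rewrite -(sintegralrM mu c^-1 h); apply: ereal_sup_ubound.
exists (scale_nnsfun h cV_ge0) => // x /=; move: (hf x); rewrite /patch EFinM.
case: ifP => _ hx; last by rewrite mule_ge0_le0 // lee_fin.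
by rewrite -[f x]cVcK; apply: lee_wpmul2l; rewrite ?lee_fin.
Qed.
End NonnegativeIntegral.

Lemma ler_ratio (R : realFieldType) (A B A' B' c : R) :
  0 <= B -> 0 <= A' -> 0 < c -> A <= c * A' -> B' <= c * B -> A' <= B' ->
  A / B <= c * c * (A' / B').
Proof.
move=> B_ge0 A'_ge0 c_gt0 le_A le_B' le_A'.
have B'_ge0 := le_trans A'_ge0 le_A'; have c_ge0 := ltW c_gt0.
have [->|B_neq0] := eqVneq B 0; first by rewrite invr0 mulr0 !mulr_ge0 ?invr_ge0.
have B_gt0 : 0 < B by rewrite lt_def B_neq0.
rewrite ler_pdivrMr //; apply: le_trans le_A _.
have [B'0|B'_neq0] := eqVneq B' 0.
  have A'0 : A' = 0 by apply/eqP; rewrite eq_le A'_ge0 -B'0 le_A'.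
  by rewrite A'0 B'0 !(mulr0, mul0r).
have -> : c * c * (A' / B') * B = c * A' + c * A' / B' * (c * B - B') by field.
by rewrite lerDl !mulr_ge0 ?invr_ge0 ?subr_ge0.
Qed.

Lemma fine_ratio_le (R : realFieldType) (A B A' B' : \bar R) (c : R) :
  (0 <= A)%E -> (0 <= B)%E -> (0 <= A')%E -> 0 < c ->
  (A <= c%:E * A')%E -> (B' <= c%:E * B)%E -> (A' <= B')%E ->
  fine A / fine B <= c * c * (fine A' / fine B').
Proof.
move=> A_ge0 B_ge0 A'_ge0 c_gt0 le_A le_B' le_A'.
have B'_ge0 := le_trans A'_ge0 le_A'; have c_ge0 := ltW c_gt0.
have [B_fin|/fin_numPn[]B_inf] := boolP (B \is a fin_num); last 2 first.
- by rewrite B_inf in B_ge0.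
- by rewrite B_inf /= invr0 mulr0 !mulr_ge0 ?invr_ge0 ?fine_ge0.
have fin_le (x y : \bar R) :
    (0 <= x)%E -> (x <= y)%E -> y \is a fin_num -> x \is a fin_num.
  by move=> x_ge0 xy; rewrite !ge0_fin_numE ?(le_trans x_ge0) //; apply: le_lt_trans.
have B'_fin : B' \is a fin_num by apply: fin_le B'_ge0 le_B' _; rewrite fin_numM.
have A'_fin : A' \is a fin_num := fin_le _ _ A'_ge0 le_A' B'_fin.
have A_fin : A \is a fin_num by apply: fin_le A_ge0 le_A _; rewrite fin_numM.
apply: ler_ratio; rewrite ?fine_ge0 // -lee_fin ?EFinM !fineK //.
Qed.

Section NormalizedIntegralRatio.
Local Open Scope classical_set_scope.
Context d (T : measurableType d) (R : realType) (mu : {measure set T -> \bar R}).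
Variables (S V : set T) (f g : T -> R) (c : R).
Hypotheses (SV : S `<=` V) (c_gt0 : 0 < c).
Hypotheses (f_ge0 : forall x, V x -> 0 <= f x) (g_ge0 : forall x, V x -> 0 <= g x).
Hypotheses (f_le : forall x, V x -> f x <= c * g x) (g_le : forall x, V x -> g x <= c * f x).

Let integral_le_scale (D : set T) (u v : T -> R) : D `<=` V ->
  (forall x, V x -> 0 <= u x) -> (forall x, V x -> 0 <= v x) ->
  (forall x, V x -> u x <= c * v x) ->
  (\int[mu]_(x in D) (u x)%:E <= c%:E * \int[mu]_(x in D) (v x)%:E)%E.
Proof.
move=> DV u_ge0 v_ge0 uv; have c_ge0 := ltW c_gt0.
apply: le_trans (ge0_integralZl_le mu c_gt0 _); last by move=> x /DV /v_ge0.
apply: ge0_le_integral_restrict => [x /DV /u_ge0 //|x /DV Vx|x].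
  by rewrite -EFinM lee_fin mulr_ge0 ?v_ge0.
by rewrite /patch; case: ifP => // /set_mem /DV Vx; rewrite -EFinM lee_fin uv.
Qed.

Lemma Rintegral_ratio_le :
  (\int[mu]_(x in S) f x) / (\int[mu]_(x in V) f x) <=
  c * c * ((\int[mu]_(x in S) g x) / (\int[mu]_(x in V) g x)).
Proof.
have ge0_int (D : set T) (u : T -> R) :
    D `<=` V -> (forall x, V x -> 0 <= u x) -> (0 <= \int[mu]_(x in D) (u x)%:E)%E.
  by move=> DV u_ge0; apply: integral_ge0 => x /DV /u_ge0.
apply: fine_ratio_le => //; [exact: ge0_int|exact: ge0_int|exact: ge0_int| | |].
- exact: integral_le_scale.
- exact: integral_le_scale.
apply: ge0_le_integral_restrict => [x /SV /g_ge0 //|x /g_ge0 //|x].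
rewrite /patch; case: ifP => [/set_mem /SV Vx|_]; first by rewrite ifT //; apply/mem_set.
by case: ifP => // /set_mem /g_ge0.
Qed.

End NormalizedIntegralRatio.

Section OrderStatistics.
Variables (R : realType) (n : nat) (D : n.-tuple R).

Lemma xs_count (P : pred R) i : (forall x y, x <= y -> P y -> P x) ->
  (0 < i <= n)%N -> P (xs D i) = (i <= count P D)%N.
Proof.
case: i => [//|j] Pdw j_lt; rewrite /xs -(count_sort (fun x y : R => x <= y)).
apply: sorted_nth_count => //; first by apply: sort_sorted; exact: le_total.
by rewrite size_sort size_tuple.
Qed.

Lemma xs_le i a : (0 < i <= n)%N -> (xs D i <= a) = (i <= count (<= a) D)%N.
Proof. by apply: (@xs_count (<= a)) => x y; apply: le_trans. Qed.

Lemma xs_lt i a : (0 < i <= n)%N -> (xs D i < a) = (i <= count (< a) D)%N.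
Proof. by apply: (@xs_count (< a)) => x y; apply: le_lt_trans. Qed.

Lemma ge_xs i a : (0 < i <= n)%N -> (a <= xs D i) = (count (< a) D < i)%N.
Proof. by move=> i_in; rewrite leNgt xs_lt // -ltnNge. Qed.

Lemma count_ge_lt a : count (>= a) D = (n - count (< a) D)%N.
Proof.
have := count_predC (< a) D; rewrite size_tuple.
suff -> : count (>= a) D = count (predC (< a)) D by lia.
by apply: eq_count => x /=; rewrite leNgt.
Qed.

End OrderStatistics.

Section MedianDistance.
Variable n : nat.
Local Notation k := (medidx n).

Lemma medidx_bounds : (k <= n <= k.*2)%N.
Proof. by have := uphalfK n; rewrite /medidx; case: (odd n) => /=; lia. Qed.

Lemma bigmin_dist_med_prefix L :
  \big[minn/k]_(j < n | (j < L)%N) dist_med n j.+1 = (k - minn k L)%N.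
Proof.
have /andP [k_le_n _] := medidx_bounds.
rewrite -[in LHS]minEnat; apply/eqP; rewrite eqn_leq -!leEnat.
apply/andP; split; last first.
  by apply: le_bigmin => [|j j_lt]; rewrite leEnat /dist_med; lia.
case: (posnP (minn k L)) => [->|kL_gt0]; first by rewrite subn0; exact: bigmin_le_id.
have j_lt : ((minn k L).-1 < n)%N by lia.
apply: le_trans (bigmin_le_cond _ (j := Ordinal j_lt) _ _) _ => /=;
  rewrite ?leEnat /dist_med; lia.
Qed.

Lemma bigmin_dist_med_suffix l : (l < n)%N ->
  \big[minn/k]_(j < n | (l <= j)%N) dist_med n j.+1 = (l.+1 - k)%N.
Proof.
move=> l_lt; have /andP [k_le_n n_le_2k] := medidx_bounds.
rewrite -[in LHS]minEnat; apply/eqP; rewrite eqn_leq -!leEnat.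
apply/andP; split; last first.
  by apply: le_bigmin => [|j j_lt]; rewrite leEnat /dist_med; lia.
have j_lt : (maxn l k.-1 < n)%N by lia.
apply: le_trans (bigmin_le_cond _ (j := Ordinal j_lt) _ _) _ => /=;
  rewrite ?leEnat /dist_med; lia.
Qed.

End MedianDistance.

Lemma qloss_count (R : realType) (n : nat) (D : n.-tuple R) a : odd n ->
  qloss D a =
    (medidx n - minn (medidx n) (minn (count (<= a) D) (count (>= a) D)))%N.
Proof.
move=> odd_n; have k2 := odd_uphalfK odd_n; rewrite -/(medidx n) in k2.
set k := medidx n in k2 *; set L := count (<= a) D; set Lt := count (< a) D.
have Lt_le_L : (Lt <= L)%N by apply: sub_count => x /ltW.
have L_le_n : (L <= n)%N by rewrite -(size_tuple D) count_size.
have ord_in (j : 'I_n) : (0 < j.+1 <= n)%N := ltn_ord j.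
rewrite count_ge_lt /qloss /median.
rewrite xs_le ?ge_xs ?xs_lt ?xs_le -/k -/L -/Lt; try lia.
under eq_bigl => j do rewrite (xs_le D a (ord_in j)).
under [in X in if _ then _ else X]eq_bigl => j do rewrite (ge_xs D a (ord_in j)).
case: ifP => [/andP [L_gt0 Lt_lt_k]|not_left].
  under eq_bigl => j do rewrite Lt_lt_k andbT.
  rewrite bigmin_dist_med_prefix; lia.
case: ifP => [/andP [k_le_Lt Lt_lt_n]|not_right].
  have k_le_L : (k <= L)%N by lia.
  under eq_bigl => j do rewrite k_le_L ltnS.
  rewrite bigmin_dist_med_suffix //; lia.
move: not_left not_right; lia.
Qed.

Lemma neighboring_count (R : realType) n (D D' : n.-tuple R) (P : pred R) :
  neighboring D D' ->
  (count P D <= count P D' + 1)%N /\ (count P D' <= count P D + 1)%N.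
Proof.
case=> [[i [y perm_D]] _].
have i_lt : (i < size D')%N.
  by have := perm_size perm_D; rewrite size_set_nth !size_tuple; lia.
have P_nth : (P (nth 0%R D' i) <= count P D')%N.
  case: (boolP (P _)) => // Pi; rewrite -has_count.
  by apply/hasP; exists (nth 0%R D' i); rewrite ?mem_nth.
rewrite (permP perm_D) count_set_nth_ltn //.
by move: P_nth; case: (P y); case: (P _) => /=; lia.
Qed.

Section Sensitivity.
Variables (R : realType) (n : nat) (D D' : n.-tuple R).
Hypothesis odd_n : odd n.
Hypothesis count_D_le : forall P : pred R, (count P D <= count P D' + 1)%N.

Lemma qloss_le_addn1 a : (qloss D' a <= qloss D a + 1)%N.
Proof.
have below : (count (<= a) D <= count (<= a) D' + 1)%N := count_D_le _.
have above : (count (>= a) D <= count (>= a) D' + 1)%N := count_D_le _.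
by rewrite !qloss_count //; lia.
Qed.

Lemma ploss_le_addr1 (m alpha l : R) : 0 <= alpha * m -> Vdom m l ->
  ploss m alpha D' l <= ploss m alpha D l + 1.
Proof.
move=> am_ge0 Vl; apply: inf_image_le_addr => [|| a _].
- by exists l; split => //; rewrite subrr normr0.
- by exists 0 => _ [a _ <-]; exact: ler0n.
- by rewrite natr1 ler_nat -addn1 qloss_le_addn1.
Qed.

Lemma expmed_weight_le (m eps alpha l : R) : 0 <= eps -> 0 <= alpha * m -> Vdom m l ->
  expmed_weight m eps alpha D l <= expR (eps / 2) * expmed_weight m eps alpha D' l.
Proof.
move=> eps_ge0 am_ge0 Vl; rewrite /expmed_weight -expRD ler_expR.
have := ploss_le_addr1 am_ge0 Vl; have : 0 <= eps / 2 by rewrite divr_ge0.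
nra.
Qed.

End Sensitivity.

Unset Implicit Arguments.

Theorem lemma7p6 (R : realType) (m eps : R) (n : nat) :
  0 < m -> (0 < n)%N -> odd n -> 0 < eps ->
  forall alpha : R, 0 <= alpha <= 1 ->
  eps_DP (n:=n) m eps (DPExpMed_prob m eps alpha).
Proof.
move=> m_gt0 _ odd_n eps_gt0 alpha /andP [alpha_ge0 _] D D' _ _ DD' S _ SV.
have am_ge0 : 0 <= alpha * m by rewrite mulr_ge0 // ltW.
have eps_ge0 := ltW eps_gt0.
rewrite /DPExpMed_prob (_ : expR eps = expR (eps / 2) * expR (eps / 2)).
  apply: Rintegral_ratio_le => //; first exact: expR_gt0.
  - by move=> l _; exact: expR_ge0.
  - by move=> l _; exact: expR_ge0.
  - move=> l Vl; apply: expmed_weight_le => // P; exact: (neighboring_count P DD').1.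
  - move=> l Vl; apply: expmed_weight_le => // P; exact: (neighboring_count P DD').2.
by rewrite -expRD -splitr.
Qed.
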